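(* With $\lambda:=\frac{-\beta+\sqrt{-1}\sqrt{4\alpha-\beta^2}}{2}:\Omega\to\mathbb C$, the structure is rigid, i.e. $i_x+i\,i_y=0$ on $\Omega$, if and only if $\lambda_x+\lambda\,\lambda_y=0$ on $\Omega$ (ordinary complex multiplication and partial derivatives).
   Context: Let $\Omega\subset\mathbb R^2$ be open with coordinates $(x,y)$, and let $\alpha,\beta\in C^1(\Omega,\mathbb R)$ satisfy $\Delta:=4\alpha-\beta^2>0$ on $\Omega$. For $z\in\Omega$ let $A_z:=\mathbb R[X]/(X^2+\beta(z)X+\alpha(z))$ and let $i=i(z)$ denote the class of $X$, so $i^2+\beta i+\alpha=0$ and $\{1,i(z)\}$ is a real basis of $A_z$. In each fiber $2i+\beta$ is invertible with $(2i+\beta)^{-1}=(-\beta-2i)/\Delta$. The derivatives of the generator are the sections $i_x:=-(\alpha_x+\beta_x i)(2i+\beta)^{-1}$, $i_y:=-(\alpha_y+\beta_y i)(2i+\beta)^{-1}$. The structure is called rigid if $i_x+i\,i_y=0$ on $\Omega$. $\sqrt{-1}$ denotes the imaginary unit of $\mathbb C$. *)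

From HB Require Import structures.
From mathcomp Require Import all_boot all_order all_algebra.
From mathcomp Require Import all_classical all_reals all_analysis.
From mathcomp Require Import complex.
Set Implicit Arguments. Unset Strict Implicit. Unset Printing Implicit Defensive.
Import Order.TTheory GRing.Theory Num.Theory.
Import numFieldNormedType.Exports.
Local Open Scope classical_set_scope.
Local Open Scope ring_scope.

Section Defs.
Variable R : realType.

Definition pdx (f : R * R -> R) (z : R * R) : R := derive1 (fun t => f (t, z.2)) z.1.
Definition pdy (f : R * R -> R) (z : R * R) : R := derive1 (fun t => f (z.1, t)) z.2.

Definition C1_on (Omega : set (R * R)) (f : R * R -> R) : Prop :=
  forall z, Omega z ->
    [/\ derivable (fun t => f (t, z.2)) z.1 1,
        derivable (fun t => f (z.1, t)) z.2 1,
        {for z, continuous (pdx f)} &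
        {for z, continuous (pdy f)}].

Definition cpdx (g : R * R -> complex.complex R) (z : R * R) : complex.complex R :=
  complex.Complex (pdx (fun w => complex.Re (g w)) z) (pdx (fun w => complex.Im (g w)) z).
Definition cpdy (g : R * R -> complex.complex R) (z : R * R) : complex.complex R :=
  complex.Complex (pdy (fun w => complex.Re (g w)) z) (pdy (fun w => complex.Im (g w)) z).

(* The fiber algebra A_z = R[X]/(X^2 + beta(z) X + alpha(z)); its elements are
   represented by polynomials, two polynomials denoting the same element iff
   they agree modulo the defining polynomial. *)
Definition defpoly (alpha beta : R * R -> R) (z : R * R) : {poly R} :=
  'X^2 + (beta z)%:P * 'X + (alpha z)%:P.

Definition Aeq (alpha beta : R * R -> R) (z : R * R) (p q : {poly R}) : Prop :=
  p %% defpoly alpha beta z = q %% defpoly alpha beta z.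

Definition Delta (alpha beta : R * R -> R) (z : R * R) : R :=
  4 * alpha z - beta z ^+ 2.

(* (2 i + beta)^{-1} = (-beta - 2 i)/Delta in A_z, with i the class of X. *)
Definition inv2ib (alpha beta : R * R -> R) (z : R * R) : {poly R} :=
  (Delta alpha beta z)^-1 *: ((- beta z)%:P - 2%:R *: 'X).

Definition i_x (alpha beta : R * R -> R) (z : R * R) : {poly R} :=
  - (((pdx alpha z)%:P + (pdx beta z)%:P * 'X) * inv2ib alpha beta z).
Definition i_y (alpha beta : R * R -> R) (z : R * R) : {poly R} :=
  - (((pdy alpha z)%:P + (pdy beta z)%:P * 'X) * inv2ib alpha beta z).

Definition rigid (Omega : set (R * R)) (alpha beta : R * R -> R) : Prop :=
  forall z, Omega z -> Aeq alpha beta z (i_x alpha beta z + 'X * i_y alpha beta z) 0.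

Definition lambda (alpha beta : R * R -> R) (z : R * R) : complex.complex R :=
  complex.Complex (- beta z / 2) (Num.sqrt (Delta alpha beta z) / 2).

End Defs.

From HB Require Import structures.
From mathcomp Require Import all_boot all_order all_algebra.
From mathcomp Require Import all_classical all_reals all_analysis.
From mathcomp Require Import complex.
From mathcomp Require Import ring.
Import Order.TTheory GRing.Theory Num.Theory.
Import numFieldNormedType.Exports.
Local Open Scope classical_set_scope.
Local Open Scope ring_scope.

(* Evaluation at [lambda z] identifies the fiber algebra A_z with the complex
   numbers: [lambda z] is a non-real root of the real quadratic defining A_z, so
   a real polynomial vanishes at it iff it is divisible by that quadratic.  This
   isomorphism sends [i] to [lambda], and differentiating
   [lambda^2 + beta lambda + alpha = 0] shows that it sends [i_x], [i_y] to
   [lambda_x], [lambda_y]; the rigidity equation is thus carried to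
   [lambda_x + lambda lambda_y = 0]. *)

Lemma size_monic_quadratic {K : nzRingType} (a b : K) :
  size ('X^2 + b%:P * 'X + a%:P) = 3.
Proof.
rewrite -addrA size_polyDl size_polyXn // size_MXaddC.
by case: ifP => // _; rewrite ltnS (leq_ltn_trans (size_polyC_leq1 b)).
Qed.

Lemma poly_size2E {K : nzRingType} {r : {poly K}} :
  (size r <= 2)%N -> r = (r`_1)%:P * 'X + (r`_0)%:P.
Proof.
move=> r2; apply/polyP => i; rewrite coefD coefMX coefC.
case: i => [|[|i]] /=; rewrite ?coefC ?addr0 ?add0r //.
by rewrite nth_default // (leq_trans r2).
Qed.

Section QuadraticRoot.
Variable R : realType.
Local Open Scope complex_scope.

Lemma is_derive_sqrt_comp {g : R -> R} {t dg : R} :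
  is_derive t 1 g dg -> 0 < g t ->
  is_derive t 1 (fun s => Num.sqrt (g s)) (dg / (2 * Num.sqrt (g t))).
Proof.
move=> dgt gt0; have := is_derive1_comp (is_derive1_sqrt gt0) dgt.
by rewrite mulrC.
Qed.

Lemma derive1_quadratic_root {A B : R -> R} {t : R} :
  derivable A t 1 -> derivable B t 1 -> 0 < 4 * A t - B t ^+ 2 ->
  let l := Complex (- B t / 2) (Num.sqrt (4 * A t - B t ^+ 2) / 2) in
  Complex (derive1 (fun s => - B s / 2) t)
          (derive1 (fun s => Num.sqrt (4 * A s - B s ^+ 2) / 2) t)
    * (2 * l + (B t)%:C) = - ((derive1 A t)%:C + (derive1 B t)%:C * l).
Proof.
move=> dA dB D0 l.
have dA' : is_derive t 1 A (derive1 A t) by rewrite derive1E; apply: derivableP.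
have dB' : is_derive t 1 B (derive1 B t) by rewrite derive1E; apply: derivableP.
have dD : is_derive t 1 (fun s => 4 * A s - B s ^+ 2)
                       (4 * derive1 A t - 2 * B t * derive1 B t).
  apply: is_derive_eq; rewrite /GRing.scale /=; ring.
have dIm := is_deriveM (is_derive_sqrt_comp dD D0) (is_derive_cst (2^-1 : R) t 1).
have dRe := is_deriveM (is_deriveN dB') (is_derive_cst (2^-1 : R) t 1).
rewrite !derive1E (@derive_val _ _ _ _ _ _ _ dIm) (@derive_val _ _ _ _ _ _ _ dRe) /l /GRing.scale /=.
set s := Num.sqrt _.
have s0 : 0 < s by rewrite sqrtr_gt0.
have s2 : s ^+ 2 = 4 * A t - B t ^+ 2 by rewrite sqr_sqrtr // ltW.
by rewrite -!derive1E; congr Complex; field; rewrite gt_eqF.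
Qed.

Lemma real_complex_commr (l : R[i]) : commr_rmorph (real_complex R) l.
Proof. by move=> a; exact: mulrC. Qed.

Local Notation ev l := (horner_morph (real_complex_commr l)).

Lemma modp_eq0_nonreal_root {d p : {poly R}} {l : R[i]} :
  size d = 3 -> ev l d = 0 -> complex.Im l != 0 -> p %% d = 0 <-> ev l p = 0.
Proof.
move=> d3 dl0 Iml; have evmod : ev l p = ev l (p %% d).
  by rewrite {1}(divp_eq p d) rmorphD rmorphM /= dl0 mulr0 add0r.
rewrite evmod; split=> [->|]; first exact: rmorph0.
have r2 : (size (p %% d)%R <= 2)%N.
  by rewrite -ltnS -[X in (_ < X)%N]d3 ltn_modp -size_poly_eq0 d3.
move: Iml; clear evmod dl0; case: l => u v /= v0.
rewrite (poly_size2E r2) rmorphD rmorphM /= horner_morphX !horner_morphC.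
move=> /eqP; rewrite eq_complex /= => /andP[/eqP Re0 Im0].
have r1 : (p %% d)`_1 = 0.
  by move: Im0; rewrite !mul0r !addr0 mulf_eq0 (negPf v0) orbF => /eqP.
by move: Re0; rewrite r1 !mul0r subr0 add0r => ->; rewrite add0r polyC0.
Qed.

Variables alpha beta : R * R -> R.

Local Notation lam z := (lambda alpha beta z).

Lemma horner_defpoly_lambda {z} :
  0 <= Delta alpha beta z -> ev (lam z) (defpoly alpha beta z) = 0.
Proof.
move=> D0; have s2 := sqr_sqrtr D0; move: s2.
rewrite /defpoly !rmorphD rmorphM rmorphXn /= horner_morphX !horner_morphC /lambda.
set s := Num.sqrt _ => s2.
have -> : alpha z = (s ^+ 2 + beta z ^+ 2) / 4 by rewrite s2 /Delta; field.
by rewrite expr2 /=; congr Complex; field.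
Qed.

Lemma horner_inv2ib z : 0 < Delta alpha beta z ->
  ev (lam z) (inv2ib alpha beta z) * (2 * lam z + (beta z)%:C) = 1.
Proof.
move=> D0; have s0 : 0 < Num.sqrt (Delta alpha beta z) by rewrite sqrtr_gt0.
have s2 := sqr_sqrtr (ltW D0); move: s0 s2.
rewrite /inv2ib -!mul_polyC rmorphM rmorphB rmorphM /= horner_morphX !horner_morphC.
rewrite /lambda; set s := Num.sqrt _ => s0 s2.
by rewrite -s2 /=; congr Complex; field; rewrite gt_eqF.
Qed.

Lemma horner_implicit_derivative z (da db : R) (c : R[i]) :
  0 < Delta alpha beta z ->
  c * (2 * lam z + (beta z)%:C) = - (da%:C + db%:C * lam z) ->
  ev (lam z) (- ((da%:P + db%:P * 'X) * inv2ib alpha beta z)) = c.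
Proof.
move=> D0 dc.
rewrite rmorphN rmorphM rmorphD rmorphM /= horner_morphX !horner_morphC.
by rewrite -[_ + _]opprK -dc mulNr opprK -mulrA [X in c * X]mulrC horner_inv2ib // mulr1.
Qed.

Lemma horner_i_x x y :
  derivable (fun t => alpha (t, y)) x 1 -> derivable (fun t => beta (t, y)) x 1 ->
  0 < Delta alpha beta (x, y) ->
  ev (lam (x, y)) (i_x alpha beta (x, y)) = cpdx (lambda alpha beta) (x, y).
Proof.
move=> da db D0; apply: horner_implicit_derivative => //.
exact: (derive1_quadratic_root da db D0).
Qed.

Lemma horner_i_y x y :
  derivable (fun t => alpha (x, t)) y 1 -> derivable (fun t => beta (x, t)) y 1 ->
  0 < Delta alpha beta (x, y) ->
  ev (lam (x, y)) (i_y alpha beta (x, y)) = cpdy (lambda alpha beta) (x, y).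
Proof.
move=> da db D0; apply: horner_implicit_derivative => //.
exact: (derive1_quadratic_root da db D0).
Qed.

Lemma rigid_at_iff x y :
  derivable (fun t => alpha (t, y)) x 1 -> derivable (fun t => beta (t, y)) x 1 ->
  derivable (fun t => alpha (x, t)) y 1 -> derivable (fun t => beta (x, t)) y 1 ->
  0 < Delta alpha beta (x, y) ->
  Aeq alpha beta (x, y) (i_x alpha beta (x, y) + 'X * i_y alpha beta (x, y)) 0 <->
  cpdx (lambda alpha beta) (x, y) + lam (x, y) * cpdy (lambda alpha beta) (x, y) = 0.
Proof.
move=> dax dbx day dby D0.
have Im_lam : complex.Im (lam (x, y)) != 0.
  by rewrite /= mulf_neq0 ?invr_eq0 // gt_eqF // sqrtr_gt0.
rewrite /Aeq mod0p (modp_eq0_nonreal_root (size_monic_quadratic _ _)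
  (horner_defpoly_lambda (ltW D0)) Im_lam).
by rewrite rmorphD rmorphM /= horner_morphX horner_i_x // horner_i_y.
Qed.
End QuadraticRoot.

Theorem proposition3p1 (R : realType) (Omega : set (R * R)) (alpha beta : R * R -> R) :
  open Omega ->
  C1_on Omega alpha -> C1_on Omega beta ->
  (forall z, Omega z -> 0 < Delta alpha beta z) ->
  (rigid Omega alpha beta <->
   (forall z, Omega z ->
      cpdx (lambda alpha beta) z + lambda alpha beta z * cpdy (lambda alpha beta) z = 0)).
Proof.
move=> _ C1alpha C1beta D0.
have rigid_atE z : Omega z ->
    Aeq alpha beta z (i_x alpha beta z + 'X * i_y alpha beta z) 0 <->
    cpdx (lambda alpha beta) z + lambda alpha beta z * cpdy (lambda alpha beta) z = 0.
  case: z => x y Oz; have [dax day _ _] := C1alpha _ Oz.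
  have [dbx dby _ _] := C1beta _ Oz.
  exact: rigid_at_iff dax dbx day dby (D0 _ Oz).
by split=> H z Oz; apply/(rigid_atE z Oz); exact: H.
Qed.
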